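(* Let $m\ge2$ and $n\ge1$ be integers, let $a\in\mathbb{R}\setminus\mathbb{Z}^-$ (where $\mathbb{Z}^-=\{k\in\mathbb{Z}:k\le0\}$), and let $\mathcal{H}_n$ be the $m$-order $n$-dimensional generalized Hilbert tensor with entries $$\mathcal{H}_{i_1\cdots i_m}=\frac{1}{i_1+\cdots+i_m-m+a},\quad i_1,\dots,i_m\in\{1,\dots,n\}.$$ Let $$M(a)=\begin{cases}\frac1a, & a>0,\\ \frac{1}{\min\{a-[a],\,1+[a]-a\}}, & -m(n-1)<a<0,\\ \frac{1}{-m(n-1)-a}, & a<-m(n-1),\end{cases}$$ where $[a]$ denotes the largest integer not exceeding $a$. Then (i) if $m$ is even, $|\lambda|\le M(a)\,n^{m-1}$ for every $H$-eigenvalue $\lambda$ of $\mathcal{H}_n$; (ii) $|\mu|\le M(a)\,n^{\frac m2}$ for every $Z$-eigenvalue $\mu$ of $\mathcal{H}_n$.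
   Context: For an $m$-order $n$-dimensional real tensor $\mathcal{A}=(a_{i_1\cdots i_m})$ and $x\in\mathbb{C}^n$, $\mathcal{A}x^{m-1}$ is the vector with $i$-th component $\sum_{i_2,\dots,i_m=1}^n a_{i i_2\cdots i_m}x_{i_2}\cdots x_{i_m}$, and $x^{[m-1]}=(x_1^{m-1},\dots,x_n^{m-1})^\top$. A real number $\lambda$ is an $H$-eigenvalue of $\mathcal{A}$ if there is a nonzero $x\in\mathbb{R}^n$ with $\mathcal{A}x^{m-1}=\lambda x^{[m-1]}$. A real number $\mu$ is a $Z$-eigenvalue of $\mathcal{A}$ if there is a nonzero $x\in\mathbb{R}^n$ with $\mathcal{A}x^{m-1}=\mu\, x\,(x^\top x)^{\frac{m-2}{2}}$. *)

From HB Require Import structures.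
From mathcomp Require Import all_boot all_order all_algebra.
From mathcomp Require Import reals.
Set Implicit Arguments. Unset Strict Implicit. Unset Printing Implicit Defensive.
Import Order.TTheory GRing.Theory Num.Theory.
Local Open Scope ring_scope.

(* An m-order n-dimensional real tensor: entries indexed by
   (i_1,...,i_m), encoded as f : {ffun 'I_m -> 'I_n} (0-based indices,
   f k = i_{k+1} - 1). *)
Definition tensor (R : realType) (m n : nat) := {ffun 'I_m -> 'I_n} -> R.

(* (A x^{m-1})_i = sum_{i_2..i_m} a_{i i_2 .. i_m} x_{i_2} ... x_{i_m}:
   sum over index tuples whose first index (position 0) is i. *)
Definition tapply (R : realType) (m n : nat) (A : tensor R m n)
  (x : 'I_n -> R) (i : 'I_n) : R :=
  \sum_(f : {ffun 'I_m -> 'I_n} | [forall k : 'I_m, (val k == 0%N) ==> (f k == i)])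
     A f * \prod_(k : 'I_m | val k != 0%N) x (f k).

Definition nonzero_vec (R : realType) (n : nat) (x : 'I_n -> R) : Prop :=
  exists j : 'I_n, x j != 0.

Definition is_H_eigenvalue (R : realType) (m n : nat) (A : tensor R m n)
  (lambda : R) : Prop :=
  exists x : 'I_n -> R, nonzero_vec x /\
    forall i : 'I_n, tapply A x i = lambda * x i ^+ m.-1.

(* Z-eigenvalue: A x^{m-1} = mu x (x^T x)^{(m-2)/2} for some nonzero real x;
   (x^T x)^{(m-2)/2} is written (sqrt (x^T x))^(m-2). *)
Definition is_Z_eigenvalue (R : realType) (m n : nat) (A : tensor R m n)
  (mu : R) : Prop :=
  exists x : 'I_n -> R, nonzero_vec x /\
    forall i : 'I_n,
      tapply A x i = mu * x i * (Num.sqrt (\sum_(j < n) x j ^+ 2)) ^+ (m - 2).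

(* Generalized Hilbert tensor: H_{i_1..i_m} = 1/(i_1+...+i_m - m + a),
   with 1-based indices i_k = (f k) + 1. *)
Definition hilbert_tensor (R : realType) (m n : nat) (a : R) : tensor R m n :=
  fun f => 1 / ((\sum_(k < m) ((f k : nat).+1)%:R) - m%:R + a).

Definition Mconst (R : realType) (m n : nat) (a : R) : R :=
  if 0 < a then 1 / a
  else if (- (m * (n - 1))%:R < a) && (a < 0) then
    1 / Num.min (a - (Num.floor a)%:~R) (1 + (Num.floor a)%:~R - a)
  else 1 / (- (m * (n - 1))%:R - a).

From HB Require Import structures.
From mathcomp Require Import all_boot all_order all_algebra.
From mathcomp Require Import reals lra ring zify.
Import Order.TTheory GRing.Theory Num.Theory.
Local Open Scope ring_scope.

(* Every entry of the Hilbert tensor is at most M(a) in absolute value: the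
  denominator is s + a with s an integer in [0, m(n-1)], and 1/M(a) is a lower
  bound for |s + a| (in the middle case, the distance from a to the nearest
  integer).  A tensor whose entries are bounded by c satisfies
  |(A x^{m-1})_i| <= c ||x||_1^{m-1}.  For an H-eigenvector, evaluating at a
  coordinate of maximal modulus gives |lambda| |x_i|^{m-1} <= c (n |x_i|)^{m-1};
  for a Z-eigenvector, pairing with x gives
  |mu| ||x||_2^m = |x^T A x^{m-1}| <= c ||x||_1^m <= c (sqrt n ||x||_2)^m. *)

Lemma sum_fixed_head_prod (R : comPzSemiRingType) (m n : nat) (i : 'I_n)
    (g : 'I_n -> R) :
  \sum_(f : {ffun 'I_m.+1 -> 'I_n} | [forall k : 'I_m.+1, (val k == 0%N) ==> (f k == i)])
     \prod_(k : 'I_m.+1 | val k != 0%N) g (f k) = (\sum_j g j) ^+ m.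
Proof.
(* The head factor is the indicator of [i]; expand the product of sums. *)
pose F (k : 'I_m.+1) (j : 'I_n) : R := if val k == 0%N then (j == i)%:R else g j.
have -> : (\sum_j g j) ^+ m = \prod_(k < m.+1) \sum_j F k j.
  rewrite big_ord_recl /F /=.
  have -> : \sum_(j < n) ((j == i)%:R : R) = 1.
    by rewrite (bigD1 i) //= eqxx big1 ?addr0 // => j /negbTE ->.
  by rewrite mul1r -[in LHS](card_ord m) -prodr_const; apply: eq_bigl.
rewrite bigA_distr_bigA /= big_mkcond /=; apply: eq_bigr => f _.
rewrite big_ord_recl /F /= big_mkcond big_ord_recl /= mul1r.
have -> : [forall k : 'I_m.+1, (val k == 0%N) ==> (f k == i)] = (f ord0 == i).
  apply/forallP/idP => [/(_ ord0) /implyP-> // | /eqP fi k].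
  by apply/implyP => /eqP k0; rewrite (_ : k = ord0) ?fi //; apply: val_inj.
by case: eqP; rewrite ?mul1r ?mul0r.
Qed.

Lemma sqr_sum_le (R : realFieldType) (n : nat) (y : 'I_n -> R) :
  (\sum_j y j) ^+ 2 <= n%:R * \sum_j y j ^+ 2.
Proof.
case: n y => [|n] y; first by rewrite !big_ord0 expr0n mul0r.
set S := \sum_j y j; set Q := \sum_j y j ^+ 2; set N : R := n.+1%:R.
have var_id : \sum_j (N * y j - S) ^+ 2 = N * (N * Q - S ^+ 2).
  rewrite (eq_bigr (fun j => N ^+ 2 * y j ^+ 2 - (2 * N * S) * y j + S ^+ 2)) => [|j _];
    last by ring.
  rewrite !big_split /= sumrN -!mulr_sumr sumr_const card_ord -/S -/Q -mulr_natl -/N.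
  ring.
have : 0 <= N * (N * Q - S ^+ 2) by rewrite -var_id sumr_ge0 // => j _; apply: sqr_ge0.
by rewrite pmulr_rge0 ?ltr0Sn // subr_ge0.
Qed.

Lemma sum_norm_le_sqrt (R : rcfType) (n : nat) (x : 'I_n -> R) :
  \sum_j `|x j| <= Num.sqrt n%:R * Num.sqrt (\sum_j x j ^+ 2).
Proof.
rewrite -sqrtrM // -(ger0_norm (sumr_ge0 _ (fun j _ => normr_ge0 (x j)))) -sqrtr_sqr.
rewrite ler_sqrt ?mulr_ge0 ?sumr_ge0 // => [|j _]; last exact: sqr_ge0.
have -> : \sum_j x j ^+ 2 = \sum_j `|x j| ^+ 2.
  by apply: eq_bigr => j _; rewrite real_normK ?num_real.
exact: sqr_sum_le.
Qed.

Section BoundedTensor.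

Variables (R : realType) (m n : nat) (A : tensor R m.+1 n) (c : R).
Hypothesis A_le : forall f, `|A f| <= c.

Lemma tapply_le (x : 'I_n -> R) (i : 'I_n) :
  `|tapply A x i| <= c * (\sum_j `|x j|) ^+ m.
Proof.
apply: le_trans (ler_norm_sum _ _ _) _.
rewrite -(@sum_fixed_head_prod _ _ _ i) mulr_sumr; apply: ler_sum => f _.
by rewrite normrM normr_prod ler_wpM2r ?prodr_ge0.
Qed.

Lemma entry_bound_ge0 (j : 'I_n) : 0 <= c.
Proof. exact: le_trans (A_le [ffun=> j]). Qed.

Lemma H_eigenvalue_le (lambda : R) :
  is_H_eigenvalue A lambda -> `|lambda| <= c * n%:R ^+ m.
Proof.
move=> [x [[j0 xj0] eig]].
have [i _ x_max] := @arg_maxP _ R _ j0 xpredT (fun j => `|x j|) isT.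
have xi_gt0 : 0 < `|x i| by apply: lt_le_trans (x_max j0 isT); rewrite normr_gt0.
have l1_le : \sum_j `|x j| <= n%:R * `|x i|.
  apply: le_trans (ler_sum _ (fun j _ => x_max j isT)) _.
  by rewrite sumr_const card_ord mulr_natl.
have := tapply_le x i; rewrite eig normrM normrX /= => eig_le.
rewrite -(ler_pM2r (exprn_gt0 m xi_gt0)); apply: le_trans eig_le _.
rewrite -mulrA -exprMn ler_wpM2l ?(entry_bound_ge0 j0) //.
by rewrite lerXn2r ?nnegrE ?sumr_ge0 ?mulr_ge0.
Qed.

Lemma Z_eigenvalue_le (mu : R) : (0 < m)%N ->
  is_Z_eigenvalue A mu -> `|mu| <= c * Num.sqrt n%:R ^+ m.+1.
Proof.
move=> m_gt0 [x [[j0 xj0] eig]].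
set s := Num.sqrt (\sum_j x j ^+ 2) in eig.
have s_gt0 : 0 < s.
  rewrite sqrtr_gt0 (bigD1 j0) //= ltr_pwDl ?sumr_ge0 // => [|j _]; last exact: sqr_ge0.
  by rewrite lt0r sqrf_eq0 xj0 sqr_ge0.
have pairing : \sum_i x i * tapply A x i = mu * s ^+ m.+1.
  rewrite (eq_bigr (fun i => mu * s ^+ (m.+1 - 2) * x i ^+ 2)) => [|i _]; last first.
    by rewrite eig; ring.
  rewrite -mulr_sumr -[\sum_i _]sqr_sqrtr ?sumr_ge0 // => [|j _]; last exact: sqr_ge0.
  by rewrite -/s -mulrA -exprD subnK.
have pairing_le : `|mu| * s ^+ m.+1 <= c * (\sum_j `|x j|) ^+ m.+1.
  rewrite -[s ^+ _]ger0_norm ?exprn_ge0 ?(ltW s_gt0) // -normrM -pairing.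
  apply: le_trans (ler_norm_sum _ _ _) _.
  rewrite exprS mulrCA mulr_suml ler_sum // => i _.
  by rewrite normrM ler_wpM2l ?tapply_le.
rewrite -(ler_pM2r (exprn_gt0 m.+1 s_gt0)); apply: le_trans pairing_le _.
rewrite -mulrA -exprMn ler_wpM2l ?(entry_bound_ge0 j0) //.
by rewrite lerXn2r ?nnegrE ?sumr_ge0 ?mulr_ge0 ?sqrtr_ge0 ?sum_norm_le_sqrt.
Qed.

End BoundedTensor.

Lemma normr_div1_le (R : numFieldType) (d y : R) :
  0 < d -> d <= `|y| -> `|1 / y| <= 1 / d.
Proof.
move=> d_gt0 d_le; have y_gt0 : 0 < `|y| by apply: lt_le_trans d_le.
by rewrite !div1r normfV lef_pV2 ?posrE.
Qed.

Lemma dist_nearest_int_le (R : archiRealFieldType) (a : R) (k : int) :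
  Num.min (a - (Num.floor a)%:~R) (1 + (Num.floor a)%:~R - a) <= `|a - k%:~R|.
Proof.
set fl := Num.floor a; have fl_le : fl%:~R <= a := floor_le a.
have lt_fl1 : a < (fl + 1)%:~R := floorD1_gt a.
rewrite intrD in lt_fl1; rewrite ge_min; case: (lerP k fl) => [k_le | fl_lt].
  have kR_le : k%:~R <= fl%:~R :> R by rewrite ler_int.
  by rewrite ger0_norm; [apply/orP; left|]; lra.
have : (fl + 1)%:~R <= k%:~R :> R by rewrite ler_int lezD1.
by rewrite intrD => kR_ge; rewrite ler0_norm; [apply/orP; right|]; lra.
Qed.

Section HilbertEntries.

Variables (R : realType) (m n : nat) (a : R).
Hypothesis a_not_nonpos_int : ~ (exists k : int, k <= 0 /\ a = k%:~R).

Lemma neq_nonpos_int (k : int) : k <= 0 -> a != k%:~R.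
Proof. by move=> k_le0; apply/eqP => a_eq; apply: a_not_nonpos_int; exists k. Qed.

Lemma normr_inv_natD_le_Mconst (s : nat) :
  (s <= m * (n - 1))%N -> `|1 / (s%:R + a)| <= Mconst m n a.
Proof.
rewrite -(ler_nat R) /Mconst; set N : R := (m * (n - 1))%:R => s_le.
have s_ge0 : 0 <= s%:R :> R := ler0n _ _.
case: ifP => [a_gt0 | /negbT a_le0]; first by apply: normr_div1_le; rewrite ?ger0_norm; lra.
case: ifP => [/andP[aN a_lt0] | /negbT aN].
  have fl_lt : (Num.floor a)%:~R < a.
    rewrite lt_neqAle floor_le eq_sym neq_nonpos_int //.
    by apply: ltW; rewrite floor_lt0.
  have lt_fl1 : a < (Num.floor a + 1)%:~R := floorD1_gt a.
  rewrite intrD in lt_fl1; apply: normr_div1_le.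
    by rewrite lt_min; apply/andP; split; lra.
  have -> : s%:R + a = a - (- s%:Z)%:~R by rewrite mulrNz opprK addrC.
  exact: dist_nearest_int_le.
have a_lt0 : a < 0 by rewrite lt_neqAle (@neq_nonpos_int 0 (lexx 0)) leNgt.
have a_neqN : a != - N.
  have -> : - N = (- (m * (n - 1))%:Z)%:~R by rewrite mulrNz.
  by rewrite neq_nonpos_int // oppr_le0.
have a_ltN : a < - N by rewrite lt_neqAle a_neqN leNgt; move: aN; rewrite a_lt0 andbT.
by apply: normr_div1_le; rewrite ?ler0_norm; lra.
Qed.

Lemma hilbert_tensor_le (f : {ffun 'I_m -> 'I_n}) :
  `|hilbert_tensor a f| <= Mconst m n a.
Proof.
rewrite /hilbert_tensor.
have -> : \sum_(k < m) (f k).+1%:R - m%:R = (\sum_(k < m) (f k : nat))%:R :> R.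
  rewrite -natr_sum (eq_bigr _ (fun k _ => esym (addn1 (f k)))) big_split /=.
  by rewrite sum_nat_const card_ord muln1 natrD addrK.
apply: normr_inv_natD_le_Mconst.
rewrite -[m in (_ <= m * _)%N]card_ord -sum_nat_const leq_sum // => k _.
by have := ltn_ord (f k); lia.
Qed.

End HilbertEntries.

Theorem theorem3p4 (R : realType) (m n : nat) (a : R)
  (hm : (2 <= m)%N) (hn : (1 <= n)%N)
  (ha : ~ (exists k : int, k <= 0 /\ a = k%:~R)) :
  (~~ odd m ->
     forall lambda : R, is_H_eigenvalue (@hilbert_tensor R m n a) lambda ->
       `|lambda| <= @Mconst R m n a * (n%:R) ^+ m.-1)
  /\
  (forall mu : R, is_Z_eigenvalue (@hilbert_tensor R m n a) mu ->
       `|mu| <= @Mconst R m n a * (Num.sqrt (n%:R)) ^+ m).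
Proof.
case: m hm => [|[|m]] // _; have entry_le := @hilbert_tensor_le R m.+2 n a ha.
split => [_ lambda | mu]; first exact: H_eigenvalue_le.
exact: Z_eigenvalue_le.
Qed.
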